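(* Let $\delta=x^{\mathbf d}f(\theta)$ be a homogeneous differential operator of degree $\mathbf d$ (with $\mathbf d\ne\mathbf 0$, $-\mathbf d\in S$), let $\mathcal B\subseteq\mathbb N^n$ be compatible with $\mathbf d$, and let $I=(x^{\mathbf a}\mid \mathbf a\in W_{\mathcal B})$. Then $I$ is $\delta$-compatible. In particular, if $\mathbf b\in W_{\mathcal B}$ and $\operatorname{val}(\mathbf b)$ is finite, then $\operatorname{vpt}(\mathbf b)\in W_{\mathcal B}$.
   Context: Standing notation. Fix $d\ge 1$. Let $\sigma\subseteq\mathbb R^d$ be a full-dimensional, strongly convex rational polyhedral cone, so $\sigma^\vee$ is full-dimensional and strongly convex. $S=\sigma^\vee\cap\mathbb Z^d$, $R=\mathbb C[S]$ with monomial basis $x^{\mathbf a}$, $\mathbf a\in S$. $h_1,\dots,h_n$ are the primitive support functions of the facets of $\sigma^\vee$, so $S=\{\mathbf a\in\mathbb Z^d:h_i(\mathbf a)\ge0\ \forall i\}$. $(g,m)!=\prod_{j=0}^m(g-j)$ for $m\ge0$, $=1$ for $m<0$; $H_{\mathbf d}=\prod_i(h_i,h_i(-\mathbf d)-1)!$. For $f$ divisible by $H_{\mathbf d}$, $\delta=x^{\mathbf d}f(\theta)$ acts by $\delta(x^{\mathbf a})=f(\mathbf a)x^{\mathbf a+\mathbf d}$. $I$ is $\delta$-compatible if $\delta(I)\subseteq I$. $V_{\mathrm{mon}}(f)=\{\mathbf a\in\mathbb Z^d:f(\mathbf a)=0\}$. Assume $\mathbf d\ne\mathbf 0$ and $-\mathbf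 d\in S$; write $\mathbf d=q\mathbf e$ with $q\in\mathbb Z_{\ge1}$ and $\mathbf e\in\mathbb Z^d$ primitive. For $\mathbf a\in\mathbb Z^d$ let $\operatorname{val}(\mathbf a)=\inf\{t\in\mathbb R:\mathbf a+t\mathbf d\in V_{\mathrm{mon}}(f)\}\in\mathbb R\cup\{\pm\infty\}$ (with $\inf\emptyset=+\infty$). When $\operatorname{val}(\mathbf a)$ is finite, let $\operatorname{pval}(\mathbf a)=\max\{t\in[\operatorname{val}(\mathbf a),\operatorname{val}(\mathbf a)+1):\mathbf a+t\mathbf d\in V_{\mathrm{mon}}(f)\}$ (such $t$ lie in $\frac1q\mathbb Z$, so the max exists) and $\operatorname{vpt}(\mathbf a)=\mathbf a+\operatorname{pval}(\mathbf a)\mathbf d\in\mathbb Z^d$. A tuple $\beta\in\mathbb N^n$ is compatible with $\mathbf d$ if for every $i$, $\beta_i=0$ or $h_i(\mathbf d)=0$; a set $\mathcal B\subseteq\mathbb N^n$ is compatible with $\mathbf d$ if each of its elements is. $W_\beta=\{\mathbf a\in S: h_i(\mathbf a)\ge\beta_i\ \forall i\}$ and $W_{\mathcal B}=\bigcup_{\beta\in\mathcal B}W_\beta$. *)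

From HB Require Import structures.
From mathcomp Require Import all_boot all_order all_algebra.
From mathcomp Require Import complex.
From mathcomp Require Import Rstruct.
From mathcomp Require Import mpoly.

Set Implicit Arguments.
Unset Strict Implicit.
Unset Printing Implicit Defensive.

Import Order.TTheory GRing.Theory Num.Theory.
Local Open Scope ring_scope.

Definition CC : numClosedFieldType := (complex Rdefinitions.R).

(** Lattice points of Z^d are integer row vectors; linear forms with integer
    coefficients are also given by integer row vectors. *)
Definition hval (d : nat) (h a : 'rV[int]_d) : int := \sum_(j < d) h 0 j * a 0 j.

Definition hvalQ (d : nat) (h : 'rV[int]_d) (v : 'rV[rat]_d) : rat :=
  \sum_(j < d) (h 0 j)%:~R * v 0 j.

Definition ratv (d : nat) (a : 'rV[int]_d) : 'rV[rat]_d := map_mx (fun z : int => z%:~R) a.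

Definition in_dual_cone (d n : nat) (h : 'I_n -> 'rV[int]_d) (v : 'rV[rat]_d) : Prop :=
  forall i, 0 <= hvalQ (h i) v.

Definition inS (d n : nat) (h : 'I_n -> 'rV[int]_d) (a : 'rV[int]_d) : Prop :=
  forall i, 0 <= hval (h i) a.

Definition full_dimensional (d n : nat) (h : 'I_n -> 'rV[int]_d) : Prop :=
  exists M : 'M[rat]_d, \rank M = d /\ forall k, in_dual_cone h (row k M).

Definition strongly_convex (d n : nat) (h : 'I_n -> 'rV[int]_d) : Prop :=
  forall v : 'rV[rat]_d, in_dual_cone h v -> in_dual_cone h (- v) -> v = 0.

Definition primitive_form (d : nat) (h : 'rV[int]_d) : Prop :=
  \big[gcdn/0%N]_(j < d) `|h ord0 j|%N = 1%N.

Definition defines_facet (d n : nat) (h : 'I_n -> 'rV[int]_d) (i : 'I_n) : Prop :=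
  exists M : 'M[rat]_(d.-1, d), \rank M = d.-1 /\
    forall k, in_dual_cone h (row k M) /\ hvalQ (h i) (row k M) = 0.

Definition facet_support_functions (d n : nat) (h : 'I_n -> 'rV[int]_d) : Prop :=
  [/\ full_dimensional h, strongly_convex h,
      (forall i, primitive_form (h i)), (forall i, defines_facet h i)
    & injective h].

(** Polynomials in theta = (theta_1, ..., theta_d), complex coefficients. *)
Definition hpoly (d : nat) (h : 'rV[int]_d) : {mpoly CC[d]} :=
  \sum_(j < d) (h 0 j)%:~R *: 'X_j.

Definition ffact (d : nat) (g : {mpoly CC[d]}) (m : int) : {mpoly CC[d]} :=
  match m with
  | Posz k => \prod_(j < k.+1) (g - j%:R)
  | Negz _ => 1
  end.

Definition Hpoly (d n : nat) (h : 'I_n -> 'rV[int]_d) (dv : 'rV[int]_d) : {mpoly CC[d]} :=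
  \prod_(i < n) ffact (hpoly (h i)) (hval (h i) (- dv) - 1).

Definition mdivides (d : nat) (p q : {mpoly CC[d]}) : Prop :=
  exists g : {mpoly CC[d]}, q = p * g.

Definition feval (d : nat) (f : {mpoly CC[d]}) (a : 'rV[int]_d) : CC :=
  f.@[fun j => (a 0 j)%:~R].

(** Elements of R = C[S], represented by their coefficient functions
    a |-> (coefficient of x^a): finitely supported, with support in S. *)
Definition coefs (d : nat) := 'rV[int]_d -> CC.

Definition inR (d n : nat) (h : 'I_n -> 'rV[int]_d) (c : coefs d) : Prop :=
  (exists s : seq 'rV[int]_d, forall a, c a != 0 -> a \in s) /\
  (forall a, c a != 0 -> inS h a).

Definition inWbeta (d n : nat) (h : 'I_n -> 'rV[int]_d) (beta : 'I_n -> nat)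
  (a : 'rV[int]_d) : Prop :=
  inS h a /\ forall i, (beta i)%:Z <= hval (h i) a.

Definition inWB (d n : nat) (h : 'I_n -> 'rV[int]_d) (B : ('I_n -> nat) -> Prop)
  (a : 'rV[int]_d) : Prop :=
  exists2 beta, B beta & inWbeta h beta a.

Definition compatible_tuple (d n : nat) (h : 'I_n -> 'rV[int]_d) (dv : 'rV[int]_d)
  (beta : 'I_n -> nat) : Prop :=
  forall i, beta i = 0%N \/ hval (h i) dv = 0.

Definition compatible_set (d n : nat) (h : 'I_n -> 'rV[int]_d) (dv : 'rV[int]_d)
  (B : ('I_n -> nat) -> Prop) : Prop :=
  forall beta, B beta -> compatible_tuple h dv beta.

(** The ideal I = (x^a | a in W_B) of R: the finite sums  sum_t r_t * x^(a_t)
    with r_t in R and a_t in W_B; the coefficient of x^b in r * x^a is r(b - a). *)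
Definition inIdealWB (d n : nat) (h : 'I_n -> 'rV[int]_d) (B : ('I_n -> nat) -> Prop)
  (c : coefs d) : Prop :=
  exists (k : nat) (r : 'I_k -> coefs d) (a : 'I_k -> 'rV[int]_d),
    (forall t, inR h (r t) /\ inWB h B (a t)) /\
    forall b, c b = \sum_(t < k) r t (b - a t).

(** delta = x^d f(theta): delta(x^a) = f(a) x^(a+d), extended linearly;
    so the coefficient of x^b in delta(c) is f(b - d) c(b - d). *)
Definition delta (d : nat) (f : {mpoly CC[d]}) (dv : 'rV[int]_d) (c : coefs d) : coefs d :=
  fun b => feval f (b - dv) * c (b - dv).

Definition delta_compatible (d : nat) (I : coefs d -> Prop) (f : {mpoly CC[d]})
  (dv : 'rV[int]_d) : Prop :=
  forall c, I c -> I (delta f dv c).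

(** t is in the set { t : a + t d in V_mon(f) }.  Since d is a nonzero integer
    vector, any real t with a + t d in Z^d is rational, so t ranges over Q. *)
Definition in_Vline (d : nat) (f : {mpoly CC[d]}) (dv a : 'rV[int]_d) (t : rat) : Prop :=
  exists z : 'rV[int]_d, ratv z = ratv a + t *: ratv dv /\ feval f z = 0.

Definition val_finite (d : nat) (f : {mpoly CC[d]}) (dv a : 'rV[int]_d) : Prop :=
  (exists t, in_Vline f dv a t) /\ (exists w, forall t, in_Vline f dv a t -> w <= t).

Definition is_val (d : nat) (f : {mpoly CC[d]}) (dv a : 'rV[int]_d) (v : rat) : Prop :=
  (forall t, in_Vline f dv a t -> v <= t) /\
  (forall w, (forall t, in_Vline f dv a t -> w <= t) -> w <= v).

Definition is_pval (d : nat) (f : {mpoly CC[d]}) (dv a : 'rV[int]_d) (v p : rat) : Prop :=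
  [/\ in_Vline f dv a p, v <= p, p < v + 1 &
      forall t, in_Vline f dv a t -> v <= t -> t < v + 1 -> t <= p].

(** Everything rests on one vanishing property of [f]: since [H_d] divides
    [f], we have [f(w) = 0] whenever [0 <= h_i(w) < h_i(-d)] for some [i].
    Hence if [w] lies in [S] but [w + d] does not, then some [h_i] has
    [0 <= h_i(w) < h_i(-d)] and [f(w) = 0]; so [delta] never pushes a
    monomial [x^w] with [f(w) != 0] out of [S].  Coordinates [i] with
    [h_i(d) = 0] are unchanged by the shift, and these are the only ones
    constrained by a compatible [beta], so [delta(x^w) \in I] for [w \in W_B].
    For [vpt(b) = b + pval(b) d]: if some [h_i] were negative there, moving
    back along [-d] by the smallest [k >= 1] bringing [h_i] into the window
    [[0, h_i(-d))] would give a zero of [f] on the line at parameter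
    [pval(b) - k < val(b)], contradicting the definition of [val(b)]. *)

From HB Require Import structures.
From mathcomp Require Import all_boot all_order all_algebra.
From mathcomp Require Import complex Rstruct mpoly zify lra.
Set Implicit Arguments.
Unset Strict Implicit.
Unset Printing Implicit Defensive.

Import Order.TTheory GRing.Theory Num.Theory.
Local Open Scope ring_scope.

Section LinearForms.
Variable d : nat.
Implicit Types (h a b : 'rV[int]_d).

Lemma hvalD h a b : hval h (a + b) = hval h a + hval h b.
Proof. by rewrite /hval -big_split; apply: eq_bigr => j _; rewrite mxE mulrDr. Qed.

Lemma hvalN h a : hval h (- a) = - hval h a.
Proof. by rewrite /hval -sumrN; apply: eq_bigr => j _; rewrite mxE mulrN. Qed.

Lemma hvalB h a b : hval h (a - b) = hval h a - hval h b.
Proof. by rewrite hvalD hvalN. Qed.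

Lemma hval0 h : hval h 0 = 0.
Proof. by rewrite /hval big1 // => j _; rewrite mxE mulr0. Qed.

Lemma hvalZ h (k : int) a : hval h (k *: a) = k * hval h a.
Proof. by rewrite /hval mulr_sumr; apply: eq_bigr => j _; rewrite mxE mulrCA. Qed.

Lemma hvalQ_ratv h a : hvalQ h (ratv a) = (hval h a)%:~R.
Proof.
rewrite /hvalQ /hval rmorph_sum; apply: eq_bigr => j _.
by rewrite mxE rmorphM.
Qed.

Lemma hvalQ_addZ h (u w : 'rV[rat]_d) (p : rat) :
  hvalQ h (u + p *: w) = hvalQ h u + p * hvalQ h w.
Proof.
rewrite /hvalQ mulr_sumr -big_split; apply: eq_bigr => j _.
by rewrite !mxE mulrDr mulrCA.
Qed.

Lemma ratvBZ a (k : int) b : ratv (a - k *: b) = ratv a - k%:~R *: ratv b.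
Proof. by apply/matrixP => i j; rewrite !mxE rmorphB rmorphM. Qed.

Lemma hval_line_fixed h a b (p : rat) z :
  ratv z = ratv a + p *: ratv b -> hval h b = 0 -> hval h z = hval h a.
Proof.
move=> ez hb0; apply: (@intr_inj rat).
by rewrite -!hvalQ_ratv ez hvalQ_addZ !hvalQ_ratv hb0 mulr0 addr0.
Qed.

Lemma feval_hpoly h a : feval (hpoly h) a = (hval h a)%:~R.
Proof.
rewrite /feval /hpoly /hval raddf_sum rmorph_sum; apply: eq_bigr => j _.
by apply: (etrans (mevalZ _ _ _)); rewrite mevalXU rmorphM.
Qed.

End LinearForms.

Lemma exists_shift_into_window (A m : int) :
  0 < m -> A < 0 -> exists2 k : int, 0 < k & 0 <= A + k * m < m.
Proof.
move=> m_gt0 A_lt0; exists (((- A - 1) %/ m)%Z + 1).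
  by rewrite ltr_wpDl // divz_ge0 ?gt_eqF //; lia.
have := divz_eq (- A - 1) m; have := modz_ge0 (- A - 1) (negbT (gt_eqF m_gt0)).
have := ltz_pmod (- A - 1) m_gt0; lia.
Qed.

Section MonomialIdeal.
Variables (d n : nat) (h : 'I_n -> 'rV[int]_d) (B : ('I_n -> nat) -> Prop).

Definition fin_supp (c : coefs d) : Prop :=
  exists s : seq 'rV[int]_d, forall a, c a != 0 -> a \in s.

Lemma inS_add a b : inS h a -> inS h b -> inS h (a + b).
Proof. by move=> Sa Sb i; rewrite hvalD addr_ge0. Qed.

Lemma inWB_inS a : inWB h B a -> inS h a.
Proof. by case=> beta _ []. Qed.

Lemma inWB_addl e a : inS h e -> inWB h B a -> inWB h B (e + a).
Proof.
move=> Se [beta Bbeta [Sa Wa]]; exists beta => //; split; first exact: inS_add.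
by move=> i; rewrite hvalD -[_%:Z]add0r lerD.
Qed.

Lemma inIdealWB_supp c :
  inIdealWB h B c -> fin_supp c /\ forall b, c b != 0 -> inWB h B b.
Proof.
case=> k [r [a [ra_ok ec]]].
have /fin_all_exists [s supp_r] :
  forall t, exists s : seq 'rV[int]_d, forall u, r t u != 0 -> u \in s.
  move=> t; exact: (ra_ok t).1.1.
have rt_neq0 b : \sum_(t < k) r t (b - a t) != 0 ->
    exists t, r t (b - a t) != 0.
  have [/existsP //|/existsPn rt_eq0] := boolP [exists t, r t (b - a t) != 0].
  by rewrite big1 ?eqxx // => t _; apply/eqP/negbNE/rt_eq0.
split.
  exists [seq u + a t | t <- enum 'I_k, u <- s t] => b.
  rewrite ec => /rt_neq0 [t rt].
  apply/allpairsPdep; exists t, (b - a t).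
  by rewrite mem_enum supp_r // subrK.
move=> b; rewrite ec => /rt_neq0 [t rt]; rewrite -(subrK (a t) b).
exact/inWB_addl/(ra_ok t).2/(ra_ok t).1.2.
Qed.

(** Every finitely supported [c] with support in [W_B] is the finite sum
    [\sum_(a in supp c) c(a) x^a] of monomial multiples of generators. *)
Lemma inIdealWB_of_supp c :
  fin_supp c -> (forall b, c b != 0 -> inWB h B b) -> inIdealWB h B c.
Proof.
case=> s supp_c W_c; set L := undup [seq b <- s | c b != 0].
have memL b : (b \in L) = (c b != 0).
  by rewrite mem_undup mem_filter; case: (boolP (c b != 0)) => // /supp_c ->.
exists (size L), (fun t u => if u == 0 then c (nth 0 L t) else 0), (nth 0 L).
split=> [t|b].
  have cLt : c (nth 0 L t) != 0 by rewrite -memL mem_nth.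
  split; last exact: W_c.
  split.
    by exists [:: 0]; move=> u; rewrite mem_seq1; case: (u == 0); rewrite ?eqxx.
  by move=> u; case: (eqVneq u 0) => [-> _ i|]; rewrite ?eqxx ?hval0.
transitivity (\sum_(x <- L) (if b - x == 0 then c x else 0)); last first.
  by rewrite (big_nth 0) big_mkord.
have [bL|bNL] := boolP (b \in L).
  rewrite (bigD1_seq b) ?undup_uniq //= subrr eqxx big1 ?addr0 // => x xb.
  by rewrite subr_eq0 eq_sym (negbTE xb).
rewrite big1_seq => [|x /= xL]; first by apply/eqP; rewrite memL negbK in bNL.
by rewrite subr_eq0; case: eqP => // bx; rewrite bx xL in bNL.
Qed.

End MonomialIdeal.

Section DifferentialOperator.
Variables (d n : nat) (h : 'I_n -> 'rV[int]_d).
Variables (f : {mpoly CC[d]}) (dv : 'rV[int]_d) (B : ('I_n -> nat) -> Prop).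
Hypothesis negd_inS : inS h (- dv).
Hypothesis H_dvd_f : mdivides (Hpoly h dv) f.
Hypothesis B_compatible : compatible_set h dv B.

(** The factor [(h_i, h_i(-d) - 1)!] of [H_d] vanishes at [w] through its
    term [h_i - h_i(w)]. *)
Lemma feval_eq0_window i w :
  0 <= hval (h i) w < hval (h i) (- dv) -> feval f w = 0.
Proof.
case/andP=> w_ge0 w_lt; case: H_dvd_f => g ->.
rewrite /feval mevalM /Hpoly (bigD1 i) //= mevalM.
have [k ek] : exists k : nat, hval (h i) (- dv) - 1 = k.
  by exists `|hval (h i) (- dv) - 1|%N; lia.
have w_le : (`|hval (h i) w| < k.+1)%N by lia.
rewrite ek /ffact (bigD1 (Ordinal w_le)) //= mevalM mevalB -/(feval _ w) feval_hpoly.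
by rewrite mevalMn meval1 natr_absz ger0_norm // subrr !mul0r.
Qed.

Lemma inS_addd w : inS h w -> feval f w != 0 -> inS h (w + dv).
Proof.
move=> Sw fw i; rewrite leNgt; apply: contra fw => wd_lt0.
apply/eqP/(feval_eq0_window (i := i)); rewrite Sw /=.
by move: wd_lt0; rewrite hvalD hvalN; lia.
Qed.

Lemma inWB_compatible_mono a a' :
  inWB h B a -> inS h a' ->
  (forall i, hval (h i) dv = 0 -> hval (h i) a <= hval (h i) a') -> inWB h B a'.
Proof.
move=> [beta Bbeta [_ Wa]] Sa' le_aa'; exists beta => //; split=> // i.
case: (B_compatible Bbeta i) => [-> | dv0]; first exact: Sa'.
exact: le_trans (Wa i) (le_aa' i dv0).
Qed.

Lemma inWB_addd w : inWB h B w -> feval f w != 0 -> inWB h B (w + dv).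
Proof.
move=> Ww fw; apply: (inWB_compatible_mono Ww (inS_addd (inWB_inS Ww) fw)).
by move=> i dv0; rewrite hvalD dv0 addr0.
Qed.

Lemma fin_supp_delta c : fin_supp c -> fin_supp (delta f dv c).
Proof.
case=> s supp_c; exists [seq u + dv | u <- s] => b.
rewrite mulf_eq0 negb_or => /andP[_ /supp_c cb].
by apply/mapP; exists (b - dv); rewrite ?subrK.
Qed.

Lemma delta_compatible_IdealWB : delta_compatible (inIdealWB h B) f dv.
Proof.
move=> c /inIdealWB_supp [supp_c W_c].
apply: inIdealWB_of_supp; first exact: fin_supp_delta.
move=> b; rewrite mulf_eq0 negb_or => /andP[fb cb].
by rewrite -(subrK dv b); apply: inWB_addd; first exact: W_c.
Qed.

Lemma inS_line_below_val b (v p : rat) z :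
  inS h b -> (forall t, in_Vline f dv b t -> v <= t) -> p < v + 1 ->
  ratv z = ratv b + p *: ratv dv -> inS h z.
Proof.
move=> Sb val_lb p_lt ez i; rewrite leNgt; apply/negP => z_lt0.
have [dv0|dv_neq0] := eqVneq (hval (h i) dv) 0.
  by move: (Sb i) z_lt0; rewrite (hval_line_fixed ez dv0); lia.
have m_gt0 : 0 < hval (h i) (- dv).
  by move: (negd_inS i) dv_neq0; rewrite hvalN; lia.
have [k k_gt0 window] := exists_shift_into_window m_gt0 z_lt0.
have fzk : feval f (z - k *: dv) = 0.
  by apply: (feval_eq0_window (i := i)); rewrite hvalB hvalZ -mulrN -hvalN.
have /val_lb : in_Vline f dv b (p - k%:~R).
  by exists (z - k *: dv); rewrite ratvBZ ez scalerBl addrA.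
have : 1 <= k%:~R :> rat by rewrite ler1z.
lra.
Qed.

Lemma inWB_vpt b : inWB h B b ->
  forall v p : rat, is_val f dv b v -> is_pval f dv b v p ->
  forall z, ratv z = ratv b + p *: ratv dv -> inWB h B z.
Proof.
move=> Wb v p [val_lb _] [_ _ p_lt _] z ez.
apply: (inWB_compatible_mono Wb).
  exact: inS_line_below_val (inWB_inS Wb) val_lb p_lt ez.
by move=> i dv0; rewrite (hval_line_fixed ez dv0).
Qed.

End DifferentialOperator.

Theorem mainTheorem6 (d n : nat) (h : 'I_n -> 'rV[int]_d)
  (f : {mpoly CC[d]}) (dv : 'rV[int]_d) (B : ('I_n -> nat) -> Prop) :
  (0 < d)%N ->
  facet_support_functions h ->
  dv != 0 ->
  inS h (- dv) ->
  mdivides (Hpoly h dv) f ->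
  compatible_set h dv B ->
  delta_compatible (inIdealWB h B) f dv /\
  (forall b : 'rV[int]_d, inWB h B b -> val_finite f dv b ->
     forall v p : rat, is_val f dv b v -> is_pval f dv b v p ->
     forall z : 'rV[int]_d, ratv z = ratv b + p *: ratv dv -> inWB h B z).
Proof.
move=> _ _ _ negd_inS H_dvd_f B_compatible; split.
  exact: delta_compatible_IdealWB H_dvd_f B_compatible.
move=> b Wb _; exact: (inWB_vpt negd_inS H_dvd_f B_compatible Wb).
Qed.
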